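(* Let $e_0,e_1\ge0$ be integers and let $\mathbf{x}_1,\mathbf{x}_2\in\mathbb{F}_2^n$ be such that $(\mathbf{x}_1,\mathbf{x}_2)$ are $(e_0+e_1,e_0+e_1)$-close. Then there exists a vector $\mathbf{y}\in\mathbb{F}_2^n$ such that both $(\mathbf{x}_1,\mathbf{y})$ and $(\mathbf{x}_2,\mathbf{y})$ are $(e_0,e_1)$-close.
   Context: For $\mathbf{x}\in\mathbb{F}_2^n$, $\mathrm{supp}(\mathbf{x})$ is the set of coordinates where $\mathbf{x}$ is $1$. For $\mathbf{x},\mathbf{y}\in\mathbb{F}_2^n$, the ordered pair $(\mathbf{x},\mathbf{y})$ is called $(e_0,e_1)$-far iff $|\mathrm{supp}(\mathbf{y})\setminus\mathrm{supp}(\mathbf{x})|>e_0$ or $|\mathrm{supp}(\mathbf{x})\setminus\mathrm{supp}(\mathbf{y})|>e_1$; otherwise $(\mathbf{x},\mathbf{y})$ is $(e_0,e_1)$-close. *)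

From mathcomp Require Import all_boot all_algebra.
Set Implicit Arguments. Unset Strict Implicit. Unset Printing Implicit Defensive.
Local Open Scope ring_scope.

Definition supp (n : nat) (x : 'rV['F_2]_n) : {set 'I_n} :=
  [set i | x 0 i != 0].

Definition far (e0 e1 : nat) (n : nat) (x y : 'rV['F_2]_n) : Prop :=
  (e0 < #|supp y :\: supp x|)%N \/ (e1 < #|supp x :\: supp y|)%N.

Definition close (e0 e1 : nat) (n : nat) (x y : 'rV['F_2]_n) : Prop :=
  ~ far e0 e1 x y.

From mathcomp Require Import all_boot all_algebra.

Set Implicit Arguments.
Unset Strict Implicit.
Unset Printing Implicit Defensive.

(* Let S1, S2 be the supports of x1, x2 and D1 = S1 \ S2, D2 = S2 \ S1, both
   of size at most e0 + e1.  Let supp y consist of S1 ∩ S2 together with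
   min(|D1|, e0) points of D1 and min(|D2|, e0) points of D2.  Then y has at
   most e0 ones outside S1 (those taken from D2), and misses only the
   |D1| - min(|D1|, e0) <= e1 points of D1 left out; symmetrically for S2. *)

Lemma exists_subset_card (T : finType) (A : {set T}) k :
  (k <= #|A|)%N -> exists2 B : {set T}, B \subset A & #|B| = k.
Proof.
elim: k => [_ | k IHk ltkA]; first by exists set0; rewrite ?sub0set ?cards0.
have [B sBA cardB] := IHk (ltnW ltkA).
have : (0 < #|A :\: B|)%N by rewrite cardsDS // cardB subn_gt0.
case/card_gt0P => x; rewrite inE => /andP [xNB xA].
exists (x |: B); first by rewrite subUset sub1set xA sBA.
by rewrite cardsU1 xNB cardB.
Qed.

Definition mid_set (T : finType) (S1 S2 A B : {set T}) : {set T} :=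
  S1 :&: S2 :|: A :|: B.

Lemma mid_setC (T : finType) (S1 S2 A B : {set T}) :
  mid_set S1 S2 A B = mid_set S2 S1 B A.
Proof. by rewrite /mid_set setIC setUAC. Qed.

Section MidSet.

Variables (T : finType) (S1 S2 A B : {set T}).
Hypotheses (sA : A \subset S1 :\: S2) (sB : B \subset S2 :\: S1).

Lemma mid_setD : mid_set S1 S2 A B :\: S1 = B.
Proof.
apply/setP => i; move: (subsetP sA i) (subsetP sB i) => /implyP + /implyP.
by rewrite !inE; case: (i \in A) (i \in B) (i \in S1) (i \in S2) => [] [] [] [].
Qed.

Lemma setD_mid_set : S1 :\: mid_set S1 S2 A B = (S1 :\: S2) :\: A.
Proof.
apply/setP => i; move: (subsetP sA i) (subsetP sB i) => /implyP + /implyP.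
by rewrite !inE; case: (i \in A) (i \in B) (i \in S1) (i \in S2) => [] [] [] [].
Qed.

End MidSet.

Lemma exists_mid_set (T : finType) (S1 S2 : {set T}) e0 e1 :
  (#|S1 :\: S2| <= e0 + e1)%N -> (#|S2 :\: S1| <= e0 + e1)%N ->
  exists Y : {set T},
    [/\ (#|Y :\: S1| <= e0)%N, (#|S1 :\: Y| <= e1)%N,
        (#|Y :\: S2| <= e0)%N & (#|S2 :\: Y| <= e1)%N].
Proof.
move=> le_D1 le_D2.
have [A sA cardA] := exists_subset_card (geq_minl #|S1 :\: S2| e0).
have [B sB cardB] := exists_subset_card (geq_minl #|S2 :\: S1| e0).
exists (mid_set S1 S2 A B).
rewrite mid_setD // setD_mid_set // mid_setC mid_setD // setD_mid_set //.
rewrite (cardsDS sA) (cardsDS sB) cardA cardB.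
by rewrite !geq_minr !leq_subLR !addn_minl !leq_min !leq_addr le_D1 le_D2.
Qed.

Lemma closeP (e0 e1 n : nat) (x y : 'rV['F_2]_n) :
  close e0 e1 x y <->
  (#|supp y :\: supp x| <= e0)%N /\ (#|supp x :\: supp y| <= e1)%N.
Proof.
rewrite /close /far !ltnNge; split => [nfar | [le0 le1] [] /negP //].
by split; apply: contra_notT nfar => nle; [left | right].
Qed.

Lemma supp_surj (n : nat) (Y : {set 'I_n}) : exists y : 'rV['F_2]_n, supp y = Y.
Proof.
exists (\row_i (i \in Y)%:R)%R; apply/setP => i.
by rewrite !inE mxE; case: (i \in Y).
Qed.

Theorem lemma1 (e0 e1 n : nat) (x1 x2 : 'rV['F_2]_n) :
  close (e0 + e1) (e0 + e1) x1 x2 ->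
  exists y : 'rV['F_2]_n, close e0 e1 x1 y /\ close e0 e1 x2 y.
Proof.
move=> /closeP [le_D2 le_D1].
have [Y [le_Y1 le_1Y le_Y2 le_2Y]] := exists_mid_set le_D1 le_D2.
have [y suppy] := supp_surj Y.
by exists y; split; apply/closeP; rewrite suppy.
Qed.
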